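(* Let $R$ be a principal ideal domain and let $a\in R$ be nonzero. Assume that $a$ has a non-unit bounded factor, i.e. there exist $r,s,p\in R$ with $a=rps$ and $p$ a bounded non-unit. Then $a$ is c-irreducible if and only if $a$ is irreducible.
   Context: A principal ideal domain (PID) is a (not necessarily commutative) domain in which every left ideal and every right ideal is principal. An element $p$ is bounded if $Rp$ contains a nonzero two-sided ideal. A non-unit $a$ is irreducible if $a=bc$ implies $b$ or $c$ is a unit. Elements $b,c$ are similar if $R/Rb\cong R/Rc$ as left $R$-modules. A nonzero $a$ is c-reducible if $a=bb'=c'c$ for some non-units $b,b',c',c\in R$ with $b$ similar to $c$; an element that is not c-reducible is c-irreducible. *)

From HB Require Import structures.
From mathcomp Require Import all_boot all_order all_algebra.
Set Implicit Arguments. Unset Strict Implicit. Unset Printing Implicit Defensive.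
Import GRing.Theory.
Local Open Scope ring_scope.

Section NCPID.
Variable R : unitRingType.

(* no zero divisors (1 != 0 holds in any unitRingType) *)
Definition nc_domain : Prop := forall x y : R, x * y = 0 -> x = 0 \/ y = 0.

Definition additive_subgroup (I : R -> Prop) : Prop :=
  I 0 /\ (forall x y, I x -> I y -> I (x - y)).

Definition left_ideal (I : R -> Prop) : Prop :=
  additive_subgroup I /\ (forall r x, I x -> I (r * x)).

Definition right_ideal (I : R -> Prop) : Prop :=
  additive_subgroup I /\ (forall r x, I x -> I (x * r)).

Definition twosided_ideal (I : R -> Prop) : Prop := left_ideal I /\ right_ideal I.

Definition lmult (x : R) : R -> Prop := fun y => exists r, y = r * x.
Definition rmult (x : R) : R -> Prop := fun y => exists r, y = x * r.

Definition is_PID : Prop :=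
  nc_domain /\
  (forall I, left_ideal I -> exists g, forall y, I y <-> lmult g y) /\
  (forall I, right_ideal I -> exists g, forall y, I y <-> rmult g y).

Definition bounded (p : R) : Prop :=
  exists I, twosided_ideal I /\ (exists x, I x /\ x <> 0) /\
            (forall x, I x -> lmult p x).

Definition irreducible_elt (a : R) : Prop :=
  a \isn't a GRing.unit /\
  (forall b c, a = b * c -> b \is a GRing.unit \/ c \is a GRing.unit).

(* b and c are similar: R/Rb ~= R/Rc as left R-modules.  A left R-module
   isomorphism R/Rb -> R/Rc is described through a map on representatives
   f : R -> R that is well defined, additive and R-linear modulo Rc,
   injective on classes and surjective on classes. *)
Definition lmod_iso_quot (b c : R) (f : R -> R) : Prop :=
  (forall x y, lmult b (x - y) -> lmult c (f x - f y)) /\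
  (forall x y, lmult c (f (x + y) - (f x + f y))) /\
  (forall r x, lmult c (f (r * x) - r * f x)) /\
  (forall x y, lmult c (f x - f y) -> lmult b (x - y)) /\
  (forall z, exists x, lmult c (f x - z)).

Definition similar (b c : R) : Prop := exists f, lmod_iso_quot b c f.

Definition c_reducible (a : R) : Prop :=
  a <> 0 /\
  exists b b' c' c : R,
    a = b * b' /\ a = c' * c /\
    b \isn't a GRing.unit /\ b' \isn't a GRing.unit /\
    c' \isn't a GRing.unit /\ c \isn't a GRing.unit /\ similar b c.

Definition c_irreducible (a : R) : Prop := ~ c_reducible a.

End NCPID.

(* Let M = R/Ra.  If right multiplication by some t is a nonzero, non-injective
   endomorphism of M, then a is c-reducible: with Rb = {x | x t ∈ Ra} and
   Rc = Rt + Ra one has a = b' b = c' c and R/Rb ≅ Rc/Ra ≅ R/Rc'; the four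
   factors are non-units because M is noetherian, so that a surjective
   endomorphism of M is injective.
   Now let a = x y with x, y non-units.  If a is bounded, let g be the invariant
   generator of the largest two-sided ideal inside Ra; then g = y t with RtR not
   inside Ra, and right multiplication by a suitable t s is nonzero and kills y.
   Otherwise take an invariant q <> 0 in Rp.  As M has finite length, for a large
   power g of q we get M = gM ⊕ ker g (Fitting).  The projection onto gM is
   nonzero since g ∉ Ra, and it is not injective: otherwise q would act
   surjectively, hence injectively, on the quotient R/Rps of M, whereas q s ∈ Rps. *)

From Pilot Require Import Defs.
From mathcomp Require Import all_boot all_order all_algebra.
From Stdlib Require Import ClassicalEpsilon.
Set Implicit Arguments. Unset Strict Implicit. Unset Printing Implicit Defensive.
Import GRing.Theory.
Local Open Scope ring_scope.

Lemma chain_mono (T : Type) (P : nat -> T -> Prop) :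
  (forall n y, P n y -> P n.+1 y) -> forall n m y, (n <= m)%N -> P n y -> P m y.
Proof.
move=> HP n m y /subnK <-; elim: (m - n)%N => [|k IH] // /IH.
by rewrite addSn; apply: HP.
Qed.

Lemma chain_anti (T : Type) (P : nat -> T -> Prop) :
  (forall n y, P n.+1 y -> P n y) -> forall n m y, (n <= m)%N -> P m y -> P n y.
Proof.
move=> HP n m y /subnK <-; elim: (m - n)%N => [|k IH] //.
by rewrite addSn => /HP /IH.
Qed.

Definition invariant (R : unitRingType) (g : R) : Prop :=
  (forall z, exists z', z * g = g * z') /\ (forall z, exists z', g * z = z' * g).

Definition lmult2 (R : unitRingType) (t a : R) : R -> Prop :=
  fun y => exists u v, y = u * t + v * a.

Definition bound (R : unitRingType) (a : R) : R -> Prop :=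
  fun b => forall r s, lmult a (r * b * s).

Section Ideals.
Variable R : unitRingType.
Implicit Types (I : R -> Prop) (a b g h r t u x y z : R).

Lemma left_ideal0 I : left_ideal I -> I 0.
Proof. by case=> [[]]. Qed.

Lemma left_idealB I x y : left_ideal I -> I x -> I y -> I (x - y).
Proof. by case=> [[_ +] _]; apply. Qed.

Lemma left_idealN I x : left_ideal I -> I x -> I (- x).
Proof. by move=> HI Ix; rewrite -sub0r; apply: left_idealB (left_ideal0 HI) Ix. Qed.

Lemma left_idealD I x y : left_ideal I -> I x -> I y -> I (x + y).
Proof. by move=> HI Ix Iy; rewrite -[y]opprK; apply: left_idealB (left_idealN HI Iy). Qed.

Lemma left_idealM I r x : left_ideal I -> I x -> I (r * x).
Proof. by case=> _; apply. Qed.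

Lemma left_ideal_lmult a : left_ideal (lmult a).
Proof.
split; [split|].
- by exists 0; rewrite mul0r.
- by move=> _ _ [u ->] [v ->]; exists (u - v); rewrite mulrBl.
- by move=> r _ [u ->]; exists (r * u); rewrite mulrA.
Qed.

Lemma right_ideal_rmult a : right_ideal (rmult a).
Proof.
split; [split|].
- by exists 0; rewrite mulr0.
- by move=> _ _ [u ->] [v ->]; exists (u - v); rewrite mulrBr.
- by move=> r _ [u ->]; exists (u * r); rewrite mulrA.
Qed.

Lemma left_ideal_lmult2 t a : left_ideal (lmult2 t a).
Proof.
split; [split|].
- by exists 0, 0; rewrite !mul0r addr0.
- move=> _ _ [u [v ->]] [u' [v' ->]]; exists (u - u'), (v - v').
  by rewrite !mulrBl opprD addrACA.
- by move=> r _ [u [v ->]]; exists (r * u), (r * v); rewrite mulrDr !mulrA.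
Qed.

Lemma lmult_refl a : lmult a a.
Proof. by exists 1; rewrite mul1r. Qed.

Lemma rmult_refl a : rmult a a.
Proof. by exists 1; rewrite mulr1. Qed.

Lemma lmultMl a r : lmult a (r * a).
Proof. by exists r. Qed.

Lemma lmult_trans a b x : lmult a x -> lmult b a -> lmult b x.
Proof. by move=> [r ->] [u ->]; exists (r * u); rewrite mulrA. Qed.

Lemma lmult0 a : lmult a 0.
Proof. exact: left_ideal0 (left_ideal_lmult a). Qed.

Lemma lmultB a x y : lmult a x -> lmult a y -> lmult a (x - y).
Proof. exact: left_idealB (left_ideal_lmult a). Qed.

Lemma lmultN a x : lmult a x -> lmult a (- x).
Proof. exact: left_idealN (left_ideal_lmult a). Qed.

Lemma lmultD a x y : lmult a x -> lmult a y -> lmult a (x + y).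
Proof. exact: left_idealD (left_ideal_lmult a). Qed.

Lemma lmultM a r x : lmult a x -> lmult a (r * x).
Proof. exact: left_idealM (left_ideal_lmult a). Qed.

Lemma lmult2l t a : lmult2 t a t.
Proof. by exists 1, 0; rewrite mul1r mul0r addr0. Qed.

Lemma lmult2r t a : lmult2 t a a.
Proof. by exists 0, 1; rewrite mul0r mul1r add0r. Qed.

Lemma lmult_unit b y : b \is a GRing.unit -> lmult b y.
Proof. by move=> bU; exists (y / b); rewrite divrK. Qed.

Lemma lmult_unitl u b y : u \is a GRing.unit -> lmult b y -> lmult (u * b) y.
Proof. by move=> uU [r ->]; exists (r / u); rewrite mulrA divrK. Qed.

Lemma twosided_ideal_bound a : twosided_ideal (bound a).
Proof.
split; split; try split.
- by move=> r s; rewrite mulr0 mul0r; apply: lmult0.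
- by move=> x y Bx By r s; rewrite mulrBr mulrBl; apply: lmultB.
- by move=> r' x Bx r s; rewrite mulrA; apply: Bx.
- by move=> r s; rewrite mulr0 mul0r; apply: lmult0.
- by move=> x y Bx By r s; rewrite mulrBr mulrBl; apply: lmultB.
- by move=> r' x Bx r s; rewrite mulrA -mulrA; apply: Bx.
Qed.

Lemma bound_lmult a b : bound a b -> lmult a b.
Proof. by move/(_ 1 1); rewrite mul1r mulr1. Qed.

Lemma bounded_bound a : bounded a -> exists x, bound a x /\ x <> 0.
Proof.
case=> I [[[_ HIl] [_ HIr]] [[x [Ix x0]] HIa]].
by exists x; split=> // r s; apply/HIa/HIr/HIl.
Qed.

Lemma invariant1 : invariant (1 : R).
Proof. by split=> z; exists z; rewrite mul1r mulr1. Qed.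

Lemma invariantM g h : invariant g -> invariant h -> invariant (g * h).
Proof.
move=> [g1 g2] [h1 h2]; split=> z.
- have [z1 e1] := g1 z; have [z2 e2] := h1 z1.
  by exists z2; rewrite mulrA e1 -mulrA e2 mulrA.
- have [z1 e1] := h2 z; have [z2 e2] := g2 z1.
  by exists z2; rewrite -mulrA e1 mulrA e2 mulrA.
Qed.

Lemma invariantX g n : invariant g -> invariant (g ^+ n).
Proof.
move=> Hg; elim: n => [|n IH]; first by rewrite expr0; apply: invariant1.
by rewrite exprS; apply: invariantM.
Qed.

Lemma invariant_twosided g : invariant g -> twosided_ideal (lmult g).
Proof.
move=> [_ Hg]; split; first exact: left_ideal_lmult.
split; first by case: (left_ideal_lmult g).
move=> r _ [u ->]; have [r' e] := Hg r.
by exists (u * r'); rewrite -mulrA e mulrA.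
Qed.

Lemma left_ideal_rmul_ker a t : left_ideal (fun y => lmult a (y * t)).
Proof.
split; [split|].
- by rewrite mul0r; apply: lmult0.
- by move=> x y xt yt; rewrite mulrBl; apply: lmultB.
- by move=> r x xt; rewrite -mulrA; apply: lmultM.
Qed.

Lemma left_ideal_lmul_ker a g : invariant g -> left_ideal (fun y => lmult a (g * y)).
Proof.
move=> [_ Hg]; split; [split|].
- by rewrite mulr0; apply: lmult0.
- by move=> x y gx gy; rewrite mulrBr; apply: lmultB.
- by move=> r x gx; have [r' e] := Hg r; rewrite mulrA e -mulrA; apply: lmultM.
Qed.

Lemma bounded_of_invariant a g :
  invariant g -> g <> 0 -> lmult a g -> bounded a.
Proof.
move=> Hg g0 ag; exists (lmult g); split; first exact: invariant_twosided.
split; first by exists g; split; first exact: lmult_refl.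
by move=> _ [r ->]; apply: lmultM.
Qed.

Lemma c_irreducible_of_irreducible a : irreducible_elt a -> c_irreducible a.
Proof.
move=> [_ Hirr] [_ [b [b' [_ [_ [ab [_ [bU [b'U _]]]]]]]]].
by case: (Hirr b b' ab) => ?; [move/negP: bU | move/negP: b'U].
Qed.

Lemma not_irreducible_factor a : a \isn't a GRing.unit -> ~ irreducible_elt a ->
  exists x y, [/\ a = x * y, x \isn't a GRing.unit & y \isn't a GRing.unit].
Proof.
move=> aU aI; apply: NNPP => noF; apply: aI; split=> // x y axy.
case: (boolP (x \is a GRing.unit)) => xU; first by left.
case: (boolP (y \is a GRing.unit)) => yU; first by right.
by case: noF; exists x, y.
Qed.

End Ideals.

Section Similarity.
Variable R : unitRingType.
Implicit Types (b c x y z : R).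

Definition eqmod c x y := lmult c (x - y).

Lemma eqmod_sym c x y : eqmod c x y -> eqmod c y x.
Proof. by rewrite /eqmod => /lmultN; rewrite opprB. Qed.

Lemma eqmod_trans c x y z : eqmod c x y -> eqmod c y z -> eqmod c x z.
Proof. by rewrite /eqmod -[x - z](subrKA y); apply: lmultD. Qed.

Lemma eqmodD c x x' y y' : eqmod c x x' -> eqmod c y y' -> eqmod c (x + y) (x' + y').
Proof. by rewrite /eqmod opprD addrACA; apply: lmultD. Qed.

Lemma eqmodM c r x y : eqmod c x y -> eqmod c (r * x) (r * y).
Proof. by rewrite /eqmod -mulrBr; apply: lmultM. Qed.

Lemma similar_sym b c : Defs.similar b c -> Defs.similar c b.
Proof.
case=> f [fwd [fD [fM [fI fS]]]].
have [g fg] := choice (fun z x => eqmod c (f x) z) fS.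
exists g; split; [|split; [|split; [|split]]].
- move=> x y cxy; apply: fI.
  exact: eqmod_trans (fg x) (eqmod_trans cxy (eqmod_sym (fg y))).
- move=> x y; apply: fI; apply: eqmod_trans (fg _) _; apply: eqmod_sym.
  exact: eqmod_trans (fD _ _) (eqmodD (fg x) (fg y)).
- move=> r x; apply: fI; apply: eqmod_trans (fg _) _; apply: eqmod_sym.
  exact: eqmod_trans (fM _ _) (eqmodM r (fg x)).
- move=> x y /fwd bxy.
  exact: eqmod_trans (eqmod_sym (fg x)) (eqmod_trans bxy (fg y)).
- by move=> z; exists (f z); apply: fI; apply: fg.
Qed.

End Similarity.

Section Domain.
Variable R : unitRingType.
Hypothesis HD : nc_domain R.
Implicit Types (a b c g t u x y : R).

Lemma mulIf_dom x : x <> 0 -> injective ( *%R^~ x).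
Proof.
move=> x0 u v e; have : (u - v) * x = 0 by rewrite mulrBl e subrr.
by case/HD=> // /eqP; rewrite subr_eq0 => /eqP.
Qed.

Lemma mulfI_dom x : x <> 0 -> injective ( *%R x).
Proof.
move=> x0 u v e; have : x * (u - v) = 0 by rewrite mulrBr e subrr.
by case/HD=> // /eqP; rewrite subr_eq0 => /eqP.
Qed.

Lemma mulr_eq1C x y : y * x = 1 -> x * y = 1.
Proof.
move=> yx; have x0 : x <> 0.
  by move=> x0; move: yx; rewrite x0 mulr0 => /eqP; rewrite eq_sym oner_eq0.
by apply: (mulIf_dom x0); rewrite -mulrA yx mulr1 mul1r.
Qed.

Lemma unitr_linv x y : y * x = 1 -> x \is a GRing.unit.
Proof. by move=> yx; apply/unitrP; exists y; rewrite yx mulr_eq1C. Qed.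

Lemma unitr_rinv x y : x * y = 1 -> x \is a GRing.unit.
Proof. by move/mulr_eq1C; apply: unitr_linv. Qed.

Lemma unitrM_dom_l x y : x * y \is a GRing.unit -> x \is a GRing.unit.
Proof. by move=> xyU; apply: (@unitr_rinv _ (y / (x * y))); rewrite mulrA divrr. Qed.

Lemma unitrM_dom_r x y : x * y \is a GRing.unit -> y \is a GRing.unit.
Proof. by move=> xyU; apply: (@unitr_linv _ ((x * y)^-1 * x)); rewrite -mulrA mulVr. Qed.

Lemma lmult_unit_dom x y : y <> 0 -> lmult (x * y) y -> x \is a GRing.unit.
Proof.
move=> y0 [r e]; apply: (@unitr_linv _ r); apply: (mulIf_dom y0).
by rewrite mul1r -mulrA -e.
Qed.

Lemma expf_neq0_dom g n : g <> 0 -> g ^+ n <> 0.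
Proof.
move=> g0; elim: n => [|n IH]; first by rewrite expr0 => /eqP; rewrite oner_eq0.
by rewrite exprS => /HD [].
Qed.

Lemma invariant_rmult g y : invariant g -> g <> 0 -> y <> 0 -> lmult y g -> rmult y g.
Proof.
move=> [H1 H2] g0 y0 [w gw]; have [f ef] := H2 y.
have gfw : g = f * w by apply: (mulIf_dom y0); rewrite /= -mulrA -gw ef.
have [w' ew'] := H1 w; exists w'; apply: (mulfI_dom g0).
by rewrite /= {1}gfw -mulrA ew' mulrA -ef -mulrA.
Qed.

(* R/Rb ~ (Rt + Ra)/Ra = Rc/Rc'c ~ R/Rc' through x |-> x u. *)
Lemma similar_ker_image a t b c c' u : c <> 0 -> a = c' * c -> t = u * c ->
  (forall y, lmult2 t a y <-> lmult c y) -> (forall y, lmult a (y * t) <-> lmult b y) ->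
  Defs.similar b c'.
Proof.
move=> c0 ea et Hc Hb; exists ( *%R^~ u); split; [|split; [|split; [|split]]] => /=.
- move=> x y /Hb [r]; rewrite et ea !mulrA => /(mulIf_dom c0) /= e.
  by exists r; rewrite -mulrBl.
- by move=> x y; rewrite mulrDl subrr; apply: lmult0.
- by move=> r x; rewrite mulrA subrr; apply: lmult0.
- move=> x y [r e]; apply/Hb; exists r.
  by rewrite et mulrA mulrBl e ea mulrA.
- move=> z; have [v [w e]] := (Hc (z * c)).2 (lmultMl c z); exists v.
  have -> : z = v * u + w * c'.
    by apply: (mulIf_dom c0); rewrite /= e et ea mulrDl !mulrA.
  by rewrite opprD addNKr; apply: lmultN; apply: lmultMl.
Qed.

End Domain.

Section PID.
Variable R : unitRingType.
Hypothesis HR : is_PID R.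
Implicit Types (I : R -> Prop) (K : nat -> R -> Prop) (a c g k p q r s t x y z : R).

Let HD : nc_domain R := proj1 HR.

Lemma left_ideal_principal I : left_ideal I -> exists g, forall y, I y <-> lmult g y.
Proof. by case: HR => _ [+ _]; apply. Qed.

Lemma right_ideal_principal I : right_ideal I -> exists g, forall y, I y <-> rmult g y.
Proof. by case: HR => _ [_]; apply. Qed.

Lemma additive_subgroup_chain_union K :
  (forall n, additive_subgroup (K n)) -> (forall n y, K n y -> K n.+1 y) ->
  additive_subgroup (fun y => exists n, K n y).
Proof.
move=> HK Kmono; split; first by exists 0%N; case: (HK 0%N).
move=> x y [n Kx] [m Ky]; exists (maxn n m); case: (HK (maxn n m)) => _; apply.
- by apply: (chain_mono Kmono _ Kx); rewrite leq_maxl.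
- by apply: (chain_mono Kmono _ Ky); rewrite leq_maxr.
Qed.

Lemma left_ideal_acc K :
  (forall n, left_ideal (K n)) -> (forall n y, K n y -> K n.+1 y) ->
  exists N, forall m y, K m y -> K N y.
Proof.
move=> HK Kmono.
have HU : left_ideal (fun y => exists n, K n y).
  split; first by apply: additive_subgroup_chain_union => // n; case: (HK n).
  by move=> r x [n Kx]; exists n; apply: left_idealM.
have [g Hg] := left_ideal_principal HU.
have [N KNg] := (Hg g).2 (lmult_refl g).
exists N => m y Kmy; have [r ->] := (Hg y).1 (ex_intro _ m Kmy).
exact: left_idealM.
Qed.

Lemma right_ideal_acc K :
  (forall n, right_ideal (K n)) -> (forall n y, K n y -> K n.+1 y) ->
  exists N, forall m y, K m y -> K N y.
Proof.
move=> HK Kmono.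
have HU : right_ideal (fun y => exists n, K n y).
  split; first by apply: additive_subgroup_chain_union => // n; case: (HK n).
  by move=> r x [n Kx]; exists n; case: (HK n) => _; apply.
have [g Hg] := right_ideal_principal HU.
have [N KNg] := (Hg g).2 (rmult_refl g).
exists N => m y Kmy; have [r ->] := (Hg y).1 (ex_intro _ m Kmy).
by case: (HK N) => _; apply.
Qed.

(* A descending chain R d_n of left ideals containing a = e_n d_n gives an
   ascending chain of right ideals e_n R. *)
Lemma left_ideal_dcc a K : a <> 0 ->
  (forall n, left_ideal (K n)) -> (forall n y, K n.+1 y -> K n y) -> (forall n, K n a) ->
  exists N, forall m y, (N <= m)%N -> K N y -> K m y.
Proof.
move=> a0 HK Kanti Ka.
have [d Hd] : exists d, forall n y, K n y <-> lmult (d n) y.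
  by apply: (choice (fun n g => forall y, K n y <-> lmult g y)) => n;
     apply: left_ideal_principal.
have [e He] : exists e, forall n, a = e n * d n.
  apply: (choice (fun n g => a = g * d n)) => n.
  by have [r ->] := (Hd n a).1 (Ka n); exists r.
have d0 n : d n <> 0 by move=> dn0; apply: a0; rewrite (He n) dn0 mulr0.
have e0 n : e n <> 0 by move=> en0; apply: a0; rewrite (He n) en0 mul0r.
have step n m : (n <= m)%N -> exists u, e n = e m * u /\ d m = u * d n.
  move=> nm; have [u du] := (Hd n (d m)).1 (chain_anti Kanti nm ((Hd m _).2 (lmult_refl _))).
  exists u; split=> //; apply: (mulIf_dom HD (d0 n)).
  by rewrite /= -mulrA -du -!He.
have [N HN] : exists N, forall m y, rmult (e m) y -> rmult (e N) y.
  apply: right_ideal_acc => [n|n y [r ->]]; first exact: right_ideal_rmult.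
  by have [u [-> _]] := step n n.+1 (leqnSn n); exists (u * r); rewrite mulrA.
exists N => m y Nm /Hd [r ->]; apply/Hd.
have [u [eN dm]] := step N m Nm; have [v ev] := HN m (e m) (rmult_refl _).
have vu : v * u = 1.
  by apply: (mulfI_dom HD (e0 N)); rewrite /= mulr1 mulrA -ev -eN.
by exists (r * v); rewrite -mulrA dm (mulrA v) vu mul1r.
Qed.

(* With I = Rg = hR, h = u g where u is a unit, so z g = u^-1 (u z g) = u^-1 h r = g r. *)
Lemma twosided_ideal_invariant I : twosided_ideal I -> (exists x, I x /\ x <> 0) ->
  exists g, [/\ g <> 0, invariant g & forall y, I y <-> lmult g y].
Proof.
move=> [HIl HIr] [x [Ix x0]].
have [g Hg] := left_ideal_principal HIl; have [h Hh] := right_ideal_principal HIr.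
have g0 : g <> 0 by move=> g0; have [r] := (Hg x).1 Ix; rewrite g0 mulr0.
have gR z : exists z', g * z = z' * g.
  have [|z' ->] := (Hg (g * z)).1; last by exists z'.
  by case: HIr => _; apply; apply/Hg/lmult_refl.
have [v gv] := (Hh g).1 ((Hg g).2 (lmult_refl g)).
have [u hu] := (Hg h).1 ((Hh h).2 (rmult_refl h)).
have [v' ev'] := gR v.
have uv' : u * v' = 1.
  by apply: (mulIf_dom HD g0); rewrite /= mul1r -mulrA -ev' mulrA -hu -gv.
have v'u := mulr_eq1C HD uv'.
exists g; split=> //; split=> // z.
have [r e] := (Hh (u * (z * g))).1 (left_idealM _ HIl ((Hg _).2 (lmultMl g z))).
exists r; have : v' * (u * (z * g)) = v' * (u * (g * r)) by rewrite e hu -mulrA.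
by rewrite !mulrA v'u !mul1r.
Qed.

Lemma bounded_invariant p : bounded p -> exists q, [/\ q <> 0, invariant q & lmult p q].
Proof.
case=> I [HI [HI0 HIp]]; have [q [q0 Hq HIq]] := twosided_ideal_invariant HI HI0.
by exists q; split=> //; apply/HIp/HIq/lmult_refl.
Qed.

Lemma quot_injective_of_surjective c (f : R -> R) :
  {morph f : x y / x - y} -> (forall r x, exists r', f (r * x) = r' * f x) ->
  lmult c (f c) -> (forall z, exists y, lmult c (z - f y)) ->
  forall x, lmult c (f x) -> lmult c x.
Proof.
move=> fB fM fc fS.
have fC x : lmult c x -> lmult c (f x).
  by case=> r ->; have [r' ->] := fM r c; apply: lmultM.
have fnB n : {morph iter n f : x y / x - y}.
  by elim: n => [|n IH] x y //; rewrite !iterS IH fB.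
have fnM n r x : exists r', iter n f (r * x) = r' * iter n f x.
  elim: n r x => [|n IH] r x; first by exists r.
  have [r1 e1] := IH r x; have [r2 e2] := fM r1 (iter n f x).
  by exists r2; rewrite !iterS e1 e2.
have fnC n x : lmult c x -> lmult c (iter n f x).
  by elim: n => [|n IH] // /IH; rewrite iterS; apply: fC.
have [N HN] : exists N, forall m y, lmult c (iter m f y) -> lmult c (iter N f y).
  apply: left_ideal_acc => [n|n y]; last by rewrite iterS; apply: fC.
  split; [split|].
  - by rewrite -(subrr 0) fnB subrr; apply: lmult0.
  - by move=> x y cx cy; rewrite fnB; apply: lmultB.
  - by move=> r x cx; have [r' ->] := fnM n r x; apply: lmultM.
have fnS n z : exists y, lmult c (z - iter n f y).
  elim: n z => [|n IH] z; first by exists z; rewrite subrr; apply: lmult0.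
  have [y Hy] := IH z; have [y' Hy'] := fS y; exists y'.
  have -> : z - iter n.+1 f y' = (z - iter n f y) + iter n f (y - f y').
    by rewrite fnB -iterSr addrA subrK.
  by apply: lmultD => //; apply: fnC.
move=> x cfx; have [y Hy] := fnS N x.
have cfNy : lmult c (iter N f y).
  apply: (HN N.+1); rewrite iterS.
  by rewrite -[iter N f y](subKr x) fB; apply: lmultB => //; apply: fC.
by rewrite -(subrK (iter N f y) x); apply: lmultD.
Qed.

Lemma rmul_quot_injective c t : lmult c (c * t) ->
  (forall z, exists y, lmult c (z - y * t)) -> forall x, lmult c (x * t) -> lmult c x.
Proof.
move=> ct tS; apply: (quot_injective_of_surjective (f := *%R^~ t)) => //.
- by move=> x y; rewrite /= mulrBl.
- by move=> r x; exists r; rewrite /= mulrA.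
Qed.

Lemma invariant_lmul_quot_injective c q : invariant q ->
  (forall z, exists y, lmult c (z - q * y)) -> forall x, lmult c (q * x) -> lmult c x.
Proof.
move=> [_ Hq] qS; apply: (quot_injective_of_surjective (f := *%R q)) => //.
- by move=> x y; rewrite /= mulrBr.
- by move=> r x; have [r' e] := Hq r; exists r'; rewrite /= mulrA e mulrA.
- exact: lmultMl.
Qed.

Lemma c_reducible_of_endo a t k : a <> 0 -> lmult a (a * t) -> ~ lmult a t ->
  ~ lmult a k -> lmult a (k * t) -> c_reducible a.
Proof.
move=> a0 at_a t_a k_a kt_a.
have [c Hc] := left_ideal_principal (left_ideal_lmult2 t a).
have [b Hb] := left_ideal_principal (left_ideal_rmul_ker a t).
have [c' ea] := (Hc a).1 (lmult2r t a).
have [u et] := (Hc t).1 (lmult2l t a).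
have [b' eb] := (Hb a).1 at_a.
have c0 : c <> 0 by move=> c0; apply: t_a; rewrite et c0 mulr0; apply: lmult0.
have cU : c \isn't a GRing.unit.
  apply/negP => cU; apply/k_a/(rmul_quot_injective at_a _ kt_a) => z.
  have [v [w ->]] := (Hc z).2 (lmult_unit z cU).
  by exists v; rewrite addrC addKr; apply: lmultMl.
split=> //; exists c', c, b', b; do !split=> //.
- apply/negP => c'U; apply: t_a; rewrite ea.
  exact: lmult_unitl c'U ((Hc t).1 (lmult2l t a)).
- by apply/negP => b'U; apply: k_a; rewrite eb; apply: lmult_unitl b'U ((Hb k).1 kt_a).
- by apply/negP => bU; apply: t_a; rewrite -[t]mul1r; apply/Hb/lmult_unit.
- exact/similar_sym/(similar_ker_image HD c0 ea et Hc Hb).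
Qed.

Section Fitting.
Variables a g : R.
Hypotheses (Hg : invariant g)
  (ker_g2 : forall y, lmult a (g * g * y) -> lmult a (g * y))
  (im_g2 : forall y, lmult2 g a y -> lmult2 (g * g) a y).

Lemma fitting_cap z : lmult a (g * z) -> lmult2 g a z -> lmult a z.
Proof.
move=> gz [u [v ez]]; have [u1 e1] := Hg.1 u.
have ggu1 : lmult a (g * g * u1).
  have -> : g * g * u1 = g * z - g * v * a by rewrite ez e1 mulrDr !mulrA addrK.
  by apply: lmultB => //; apply: lmultMl.
by rewrite ez e1; apply: lmultD (ker_g2 ggu1) (lmultMl _ _).
Qed.

Lemma fitting_sum z : exists y, lmult a (g * (z - g * y)).
Proof.
have [z' ez] := Hg.2 z.
have [u [v e]] : lmult2 (g * g) a (g * z) by apply: im_g2; exists z', 0; rewrite ez mul0r addr0.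
have [u1 e1] := Hg.1 u; have [u2 e2] := Hg.1 u1.
have eu : u * (g * g) = g * (g * u2) by rewrite mulrA e1 -mulrA e2.
by exists u2; rewrite mulrBr e eu addrC addKr; apply: lmultMl.
Qed.

(* The projection of R/Ra onto g(R/Ra) along ker g is right multiplication by
   t = g y, where 1 = g y + (1 - g y) splits 1 along the two summands. *)
Lemma fitting_c_reducible k : a <> 0 -> ~ lmult a g ->
  lmult a (g * k) -> ~ lmult a k -> c_reducible a.
Proof.
move=> a0 g_a gk k_a.
have Ker := left_ideal_lmul_ker a Hg.
have Ra_ker z : lmult a z -> lmult a (g * z).
  by case=> r ->; rewrite mulrA; apply: lmultMl.
have [y gm] := fitting_sum 1; set t := g * y.
have t_im : lmult2 g a t by have [y' e] := Hg.2 y; exists y', 0; rewrite /t e mul0r addr0.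
have ker_t z : lmult a (g * z) -> lmult a (z * t).
  move=> gz; apply: fitting_cap; last exact: left_idealM (left_ideal_lmult2 g a) t_im.
  have -> : z * t = z - z * (1 - t) by rewrite mulrBr mulr1 subKr.
  exact: left_idealB Ker gz (left_idealM _ Ker gm).
apply: (c_reducible_of_endo (t := t) (k := k) a0 _ _ k_a (ker_t k gk)).
- exact: ker_t a (Ra_ker _ (lmult_refl a)).
- move=> ta; apply: g_a; rewrite -[g]mulr1 -(subrK t 1) mulrDr.
  exact: lmultD gm (Ra_ker _ ta).
Qed.

End Fitting.

Lemma fitting_index a q : a <> 0 -> invariant q -> exists n, [/\ (0 < n)%N,
  forall y, lmult a (q ^+ n * q ^+ n * y) -> lmult a (q ^+ n * y) &
  forall y, lmult2 (q ^+ n) a y -> lmult2 (q ^+ n * q ^+ n) a y].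
Proof.
move=> a0 Hq.
have Kmono n y : lmult a (q ^+ n * y) -> lmult a (q ^+ n.+1 * y).
  by rewrite exprS -mulrA; apply: lmultM.
have Lanti n y : lmult2 (q ^+ n.+1) a y -> lmult2 (q ^+ n) a y.
  by case=> u [v ->]; exists (u * q), v; rewrite exprS mulrA.
have [N1 HN1] := left_ideal_acc (K := fun n y => lmult a (q ^+ n * y))
  (fun n => left_ideal_lmul_ker a (invariantX n Hq)) Kmono.
have [N2 HN2] := left_ideal_dcc (K := fun n => lmult2 (q ^+ n) a) a0
  (fun n => left_ideal_lmult2 _ a) Lanti (fun n => lmult2r _ a).
exists (maxn N1 N2).+1; rewrite -exprD; split=> // y.
- by move/HN1/(chain_mono Kmono (leqW (leq_maxl N1 N2))).
- move/(chain_anti Lanti (leqW (leq_maxr N1 N2))); apply: HN2.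
  exact: leq_trans (leqW (leq_maxr N1 N2)) (leq_addr _ _).
Qed.

Lemma c_reducible_bounded a x y : a <> 0 -> a = x * y ->
  x \isn't a GRing.unit -> y \isn't a GRing.unit -> bounded a -> c_reducible a.
Proof.
move=> a0 axy xU yU /bounded_bound aB.
have [g [g0 Hg HBg]] := twosided_ideal_invariant (twosided_ideal_bound a) aB.
have Bg : bound a g := (HBg g).2 (lmult_refl g).
have y0 : y <> 0 by move=> y0; apply: a0; rewrite axy y0 mulr0.
have [t gt] : rmult y g.
  apply: (invariant_rmult HD Hg g0 y0).
  by have [w ->] := bound_lmult Bg; rewrite axy mulrA; apply: lmultMl.
have t_B : ~ bound a t.
  move=> /HBg [r e]; move/negP: yU; apply; apply: (unitr_rinv HD (y := r)).
  by apply: (mulIf_dom HD g0); rewrite /= mul1r -mulrA -e -gt.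
have [r [s rts]] : exists r s, ~ lmult a (r * t * s).
  by apply: NNPP => H; apply: t_B => r s; apply: NNPP => ?; apply: H; exists r, s.
apply: (c_reducible_of_endo (t := t * s) (k := y) a0).
- have -> : a * (t * s) = x * g * s by rewrite {1}axy gt !mulrA.
  exact: Bg.
- by move=> ts; apply: rts; rewrite -mulrA; apply: lmultM.
- by move=> ya; move/negP: xU; apply; apply: (lmult_unit_dom HD y0); rewrite -axy.
- by rewrite mulrA -gt -(mul1r g); apply: Bg.
Qed.

Lemma c_reducible_unbounded a r p s q : a <> 0 -> a = r * p * s ->
  p \isn't a GRing.unit -> q <> 0 -> invariant q -> lmult p q -> ~ bounded a ->
  c_reducible a.
Proof.
move=> a0 arps pU q0 Hq pq aB.
have [m [m_gt0 ker2 im2]] := fitting_index a0 Hq.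
case: m m_gt0 ker2 im2 => // n _ ker2 im2.
have Hg := invariantX n.+1 Hq.
have g_a : ~ lmult a (q ^+ n.+1).
  by move/(bounded_of_invariant Hg (expf_neq0_dom HD q0)).
have [[k [gk k_a]] | noK] := classic (exists k, lmult a (q ^+ n.+1 * k) /\ ~ lmult a k).
  exact: (fitting_c_reducible Hg ker2 im2 a0 g_a gk k_a).
have s0 : s <> 0 by move=> s0; apply: a0; rewrite arps s0 mulr0.
case/negP: pU; apply: (lmult_unit_dom HD s0).
apply: (invariant_lmul_quot_injective Hq) => [z|]; last first.
  by case: pq => w ->; rewrite -mulrA; apply: lmultMl.
have [y gy] := fitting_sum Hg im2 z; exists (q ^+ n * y); rewrite mulrA -exprS.
apply: (lmult_trans (a := a)); last by exists r; rewrite arps mulrA.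
by apply: NNPP => z_a; apply: noK; exists (z - q ^+ n.+1 * y).
Qed.

End PID.

Theorem proposition3p7 (R : unitRingType) (HR : is_PID R) (a : R) (ha : a <> 0)
  (hbf : exists r s p : R, a = r * p * s /\ bounded p /\ p \isn't a GRing.unit) :
  c_irreducible a <-> irreducible_elt a.
Proof.
have HD : nc_domain R := proj1 HR.
have [r [s [p [arps [pB pU]]]]] := hbf.
split=> [aCI|]; last exact: c_irreducible_of_irreducible.
have aU : a \isn't a GRing.unit.
  by apply: contra pU; rewrite arps => /(unitrM_dom_l HD) /(unitrM_dom_r HD).
apply: NNPP => aI; apply: aCI.
have [x [y [axy xU yU]]] := not_irreducible_factor aU aI.
have [q [q0 Hq pq]] := bounded_invariant HR pB.
have [aB | aNB] := classic (bounded a).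
  exact: (c_reducible_bounded HR ha axy xU yU aB).
exact: (c_reducible_unbounded HR ha arps pU q0 Hq pq aNB).
Qed.
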